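(* Let $\mathbf M=(m_1,\dots,m_r)$ be a Motzkin path and suppose the seed $(\mathbf x,B)$ is obtained from $(\mathbf x_0,B_0)$ by a finite sequence of $Q$-system mutations, each intermediate cluster being of the form $\mathbf x_{\mathbf M'}$ for a Motzkin path $\mathbf M'$, and the final cluster being $\mathbf x_{\mathbf M}$. Then $B=B(\mathbf M)$ where, for $1\le i,j\le r$ and with $C$ the Cartan matrix of $A_r$, $$B(\mathbf M)_{i,j}=(-1)^{\lfloor\frac{m_j+1}{2}\rfloor}\Bigl((-1)^{\lfloor\frac{m_i}{2}\rfloor}-(-1)^{\lfloor\frac{m_j}{2}\rfloor}\Bigr)\delta_{|i-j|,1},$$ $$B(\mathbf M)_{i,j+r}=(-1)^{\lfloor\frac{m_i+1}{2}\rfloor+\lfloor\frac{m_j}{2}\rfloor+1}C_{i,j},\qquad B(\mathbf M)_{i+r,j}=(-1)^{\lfloor\frac{m_i}{2}\rfloor+\lfloor\frac{m_j+1}{2}\rfloor}C_{i,j},$$ $$B(\mathbf M)_{i+r,j+r}=(-1)^{\lfloor\frac{m_i}{2}\rfloor}\Bigl((-1)^{\lfloor\frac{m_j+1}{2}\rfloor}-(-1)^{\lfloor\frac{m_i+1}{2}\rfloor}\Bigr)\delta_{|i-j|,1}.$$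
   Context: Fix $r\ge1$, $I_r=\{1,\dots,r\}$, and let $(R_{\alpha,n})_{0\le\alpha\le r+1,n\in\mathbb Z}$ be the $A_r$ $Q$-system: $R_{1,0},\dots,R_{r,0},R_{1,1},\dots,R_{r,1}$ are algebraically independent indeterminates, $R_{0,n}=R_{r+1,n}=1$, and $R_{\alpha,n+1}R_{\alpha,n-1}=R_{\alpha,n}^2+R_{\alpha+1,n}R_{\alpha-1,n}$. $C$ is the $r\times r$ Cartan matrix of $A_r$ ($C_{ii}=2$, $C_{ij}=-1$ if $|i-j|=1$, $0$ otherwise). Cluster algebra conventions (rank $2r$, no coefficients): a seed is a pair $(\mathbf x,B)$ with $\mathbf x=(x_1,\dots,x_{2r})$ and $B$ a skew-symmetric integer $2r\times 2r$ matrix. The mutation $\mu_k$ replaces $x_k$ by $x_k'=x_k^{-1}\bigl(\prod_i x_i^{[B_{ik}]_+}+\prod_i x_i^{[-B_{ik}]_+}\bigr)$ ($[n]_+=\max(n,0)$), leaves other $x_j$ unchanged, and replaces $B$ by $B'$ with $B'_{ij}=-B_{ij}$ if $i=k$ or $j=k$, and $B'_{ij}=B_{ij}+\mathrm{sign}(B_{ik})[B_{ik}B_{kj}]_+$ otherwise. The initial seed is $\mathbf x_0=(R_{1,0},\dots,R_{r,0},R_{1,1},\dots,R_{r,1})$, $B_0=\begin{pmatrix}0&-C\\ C&0\end{pmatrix}$ (so $(B_0)_{i,j+r}=-C_{ij}$, $(B_0)_{i+r,j}=C_{ij}$). A Motzkin path is $\mathbf M=(m_1,\dots,m_r)\in\mathbb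 Z^r$ with $|m_{\alpha+1}-m_\alpha|\le1$ for $1\le\alpha<r$. Its cluster $\mathbf x_{\mathbf M}=(x_1,\dots,x_{2r})$ is defined by: for $\alpha\in I_r$, $x_\alpha$ is whichever of $R_{\alpha,m_\alpha},R_{\alpha,m_\alpha+1}$ has even second index and $x_{\alpha+r}$ is the one with odd second index (so $\mathbf x_{(0,\dots,0)}=\mathbf x_0$). A $Q$-system mutation is a mutation $\mu_k$ ($k=\alpha$ or $k=\alpha+r$) replacing a cluster entry $R_{\alpha,n\mp1}$ by $R_{\alpha,n\pm1}$, i.e. one that changes one $m_\alpha$ by $\pm1$. *)

From HB Require Import structures.
From mathcomp Require Import all_boot all_order all_algebra.
Set Implicit Arguments. Unset Strict Implicit. Unset Printing Implicit Defensive.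
Import Order.TTheory GRing.Theory Num.Theory.
Local Open Scope ring_scope.

Fixpoint mpoly (n : nat) : comNzRingType :=
  if n is n'.+1 then {poly (mpoly n')} else int.

Fixpoint meval (F : comNzRingType) (n : nat) : (nat -> F) -> mpoly n -> F :=
  match n return (nat -> F) -> mpoly n -> F with
  | 0 => fun _ p => (p : int)%:~R
  | n'.+1 => fun y p =>
      \sum_(i < size (p : {poly mpoly n'}))
         meval (fun j => y j.+1) (p : {poly mpoly n'})`_i * y 0%N ^+ i
  end.

Definition alg_indep (F : comNzRingType) (n : nat) (y : nat -> F) : Prop :=
  forall p : mpoly n, meval y p = 0 -> p = 0.

Definition is_Qsystem (F : fieldType) (r : nat) (R : nat -> int -> F) : Prop :=
  [/\ forall n, R 0%N n = 1,
      forall n, R r.+1 n = 1 &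
      forall (a : nat) (n : int), (1 <= a <= r)%N ->
        R a (n + 1) * R a (n - 1) = R a n ^+ 2 + R a.+1 n * R a.-1 n].

Definition Qinit (F : fieldType) (r : nat) (R : nat -> int -> F) (j : nat) : F :=
  if (j < r)%N then R j.+1 0 else R (j - r).+1 1.

(* indices are 0-based: i : 'I_r stands for alpha = i+1 *)
Definition cartan (r : nat) : 'M[int]_r :=
  \matrix_(i, j) (if i == j then 2 else
                  if (i.+1 == j :> nat) || (j.+1 == i :> nat) then -1 else 0).

Definition B0 (r : nat) : 'M[int]_(r + r) :=
  block_mx 0 (- cartan r) (cartan r) 0.

Definition mutB (n : nat) (k : 'I_n) (B : 'M[int]_n) : 'M[int]_n :=
  \matrix_(i, j) (if (i == k) || (j == k) then - B i j
                  else B i j + sgz (B i k) * Num.max (B i k * B k j) 0).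

Definition mutx (F : fieldType) (n : nat) (k : 'I_n) (B : 'M[int]_n)
    (x : 'I_n -> F) : 'I_n -> F :=
  fun j => if j == k then
      (x k)^-1 * (\prod_i x i ^+ `|Num.max (B i k) 0|%N
                  + \prod_i x i ^+ `|Num.max (- B i k) 0|%N)
    else x j.

(* M i stands for m_{i+1} *)
Definition motzkin (r : nat) (M : 'I_r -> int) : Prop :=
  forall i j : 'I_r, i.+1 = j :> nat -> `|M j - M i| <= 1.

(* label (alpha, n) of the cluster entry R_{alpha,n} at each position of x_M *)
Definition lab (r : nat) (M : 'I_r -> int) (p : 'I_(r + r)) : nat * int :=
  match split p with
  | inl i => (i.+1, if odd `|M i|%N then M i + 1 else M i)   (* even index *)
  | inr i => (i.+1, if odd `|M i|%N then M i else M i + 1)   (* odd index *)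
  end.

Definition clus (F : fieldType) (r : nat) (R : nat -> int -> F)
    (M : 'I_r -> int) : 'I_(r + r) -> F :=
  fun p => R (lab M p).1 (lab M p).2.

Definition qmut (r : nat) (M M' : 'I_r -> int) (k : 'I_(r + r)) : Prop :=
  exists (a : 'I_r) (n e : int),
    [/\ (e = 1 \/ e = -1), M' a = M a + e & (forall b, b != a -> M' b = M b)] /\
    [/\ lab M k = (a.+1, n - e), lab M' k = (a.+1, n + e) &
        (forall p, p != k -> lab M' p = lab M p)].

Fixpoint Bmut (r : nat) (k : nat -> 'I_(r + r)) (t : nat) : 'M[int]_(r + r) :=
  if t is t'.+1 then mutB (k t') (Bmut k t') else B0 r.

Definition negpow (z : int) : int := (-1) ^+ `|z|%N.
Definition fl2 (z : int) : int := (z %/ 2)%Z.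
Definition adj (r : nat) (i j : 'I_r) : int :=
  ((i.+1 == j :> nat) || (j.+1 == i :> nat))%:R.

Definition BM (r : nat) (M : 'I_r -> int) : 'M[int]_(r + r) :=
  block_mx
    (\matrix_(i, j) (negpow (fl2 (M j + 1)) *
                      (negpow (fl2 (M i)) - negpow (fl2 (M j))) * adj i j))
    (\matrix_(i, j) (negpow (fl2 (M i + 1) + fl2 (M j) + 1) * cartan r i j))
    (\matrix_(i, j) (negpow (fl2 (M i) + fl2 (M j + 1)) * cartan r i j))
    (\matrix_(i, j) (negpow (fl2 (M i)) *
                      (negpow (fl2 (M j + 1)) - negpow (fl2 (M i + 1))) * adj i j)).

(* By induction on t it suffices
   to show that B(0, ..., 0) is the initial matrix B_0 and that a single
   Q-system mutation mu_k between Motzkin paths M and M' sends B(M) to B(M').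
   Only the combinatorics of the mutation direction k is used.

   The entry B(M)_{pq} only depends on the blocks of the positions p and q, on
   the relative position (equal, adjacent or distant) of their indices in the
   A_r diagram, and on the residues mod 4 ("phases") of the corresponding steps
   of M.  The identity mu_k(B(M))_{pq} = B(M')_{pq} therefore reduces to a
   finite table, indexed by the blocks of p, q, k, the direction of the step,
   three phases and three relative positions, restricted by the geometry of the
   A_r diagram, by the Motzkin conditions on M and M', and by k being a Q-system
   mutation.  The table is verified by computation. *)

From HB Require Import structures.
From mathcomp Require Import all_boot all_order all_algebra zify.
Import Order.TTheory GRing.Theory Num.Theory.
Local Open Scope ring_scope.

Definition phase (x : int) : nat := `|(x %% 4)%Z|%N.

Lemma phase_lt4 (x : int) : (phase x < 4)%N.
Proof. by rewrite /phase -ltz_nat gez0_abs ?modz_ge0 // ltz_pmod. Qed.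

Lemma phase_mod (x : int) : (x %% 4)%Z = (phase x)%:Z.
Proof. by rewrite /phase gez0_abs ?modz_ge0. Qed.

(* Written with 2 * 2 so that halving x is immediate. *)
Lemma phaseE (x : int) : x = (x %/ 4)%Z * 2 * 2 + (phase x)%:Z.
Proof. by rewrite -phase_mod -mulrA -divz_eq. Qed.

Lemma phaseS (x : int) : phase (x + 1) = ((phase x).+1 %% 4)%N.
Proof.
apply/eqP; rewrite -eqz_nat -phase_mod -modz_nat -[(phase x).+1]addn1 PoszD -phase_mod.
by rewrite modzDml.
Qed.

Lemma phaseN1 (x : int) : phase (x - 1) = ((phase x + 3) %% 4)%N.
Proof.
have := phaseS (x - 1); rewrite subrK => ->.
by have := phase_lt4 (x - 1); case: (phase (x - 1)) => [|[|[|[|]]]].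
Qed.

Lemma negpowD (a b : int) : negpow (a + b) = negpow a * negpow b.
Proof.
have negpowE (z : int) : negpow z = (-1) ^ z.
  by case: z => n //=; rewrite /negpow /= NegzE -exprnN invr_sign.
by rewrite !negpowE exprzDr // unitrN1.
Qed.

Lemma negpow_double (z : int) : negpow (z * 2) = 1.
Proof. by rewrite /negpow abszM mulnC exprM /= sqrrN !expr1n. Qed.

Lemma negpow_phase (z : int) : negpow z = negpow (phase z).
Proof. by rewrite {1}(phaseE z) negpowD negpow_double mul1r. Qed.

Lemma odd_phase (z : int) : odd `|z|%N = odd (phase z).
Proof.
have := negpow_phase z; rewrite /negpow absz_nat -signr_odd -[RHS]signr_odd.
by case: (odd _); case: (odd _) => // /eqP.
Qed.

(* The sign (-1)^floor(u/2) attached to a phase u. *)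
Definition half_sign (u : nat) : int := if (u < 2)%N then 1 else -1.

Lemma negpow_fl2 (x : int) : negpow (fl2 x) = half_sign (phase x).
Proof.
rewrite /fl2 {1}(phaseE x) (divzMDl _ _ (_ : 2 != 0)) // negpowD negpow_double mul1r.
by have := phase_lt4 x; rewrite /half_sign; case: (phase x) => [|[|[|[|]]]].
Qed.

(* Two phases of integers at distance at most one. *)
Definition near (u v : nat) : bool :=
  [|| u == v, v == (u.+1 %% 4)%N | u == (v.+1 %% 4)%N].

Lemma near_sym (u v : nat) : near u v = near v u.
Proof. by rewrite /near [u == v]eq_sym; congr (_ || _); apply: orbC. Qed.

Lemma near_phase (x y : int) : `|y - x| <= 1 -> near (phase x) (phase y).
Proof.
rewrite ler_norml => /andP[ge_m1 le_1].
have : y = x \/ y = x + 1 \/ x = y + 1 by lia.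
by case=> [|[|]] ->; rewrite /near ?phaseS eqxx ?orbT.
Qed.

(* A position p of a cluster of size 2r is described by its block (false for
   the entries with even second index, true for odd ones) and its index. *)
Definition blk {r} (p : 'I_(r + r)) : bool := if split p is inr _ then true else false.
Definition idx {r} (p : 'I_(r + r)) : 'I_r := match split p with inl i => i | inr i => i end.

Lemma eq_pos {r} (p q : 'I_(r + r)) : (p == q) = (blk p == blk q) && (idx p == idx q).
Proof.
rewrite -(splitK p) -(splitK q) (inj_eq (can_inj unsplitK)) /blk /idx !unsplitK.
by case: (split p) => i; case: (split q) => j.
Qed.

Definition rel {r} (i j : 'I_r) : nat :=
  if i == j then 0 else if (i.+1 == j :> nat) || (j.+1 == i :> nat) then 1 else 2.

Lemma rel_lt3 {r} (i j : 'I_r) : (rel i j < 3)%N.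
Proof. by rewrite /rel; case: (i == j) => //; case: (_ || _). Qed.

Lemma rel_sym {r} (i j : 'I_r) : rel i j = rel j i.
Proof. by rewrite /rel eq_sym orbC. Qed.

Lemma rel_eq0 {r} (i j : 'I_r) : (rel i j == 0%N) = (i == j).
Proof. by rewrite /rel; case: (i == j) => //; case: (_ || _). Qed.

Lemma rel_eq1 {r} (i j : 'I_r) :
  rel i j == 1%N -> (i.+1 = j :> nat) \/ (j.+1 = i :> nat).
Proof. by rewrite /rel; case: (i == j) => //; case: (orP) => // -[] /eqP; tauto. Qed.

(* The relative positions of three nodes i, j, a, as constrained by the
   geometry of the A_r diagram (a line): equality is transitive and no three
   nodes are pairwise adjacent. *)
Definition rel_consistent (cij cia caj : nat) : bool :=
  [&& (cia == 0%N) ==> (cij == caj), (caj == 0%N) ==> (cij == cia),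
      (cij == 0%N) ==> (cia == caj) & ~~ [&& cij == 1%N, cia == 1%N & caj == 1%N]].

Lemma rel_consistentP {r} (i j a : 'I_r) : rel_consistent (rel i j) (rel i a) (rel a j).
Proof.
rewrite /rel_consistent !rel_eq0.
apply/and4P; split; try by apply/implyP => /eqP eq_ij; rewrite ?eq_ij // rel_sym.
apply/negP => /and3P[/rel_eq1 ? /rel_eq1 ? /rel_eq1 ?]; lia.
Qed.

Definition path_ok (c u v : nat) : bool := ((c == 0%N) ==> (u == v)) && ((c == 1%N) ==> near u v).

Lemma motzkin_path_ok {r} {M : 'I_r -> int} (i j : 'I_r) :
  motzkin M -> path_ok (rel i j) (phase (M i)) (phase (M j)).
Proof.
move=> motM; apply/andP; split; apply/implyP; first by rewrite rel_eq0 => /eqP ->.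
case/rel_eq1 => adj_ij; first exact/near_phase/motM.
by rewrite near_sym; apply/near_phase/motM.
Qed.

Definition cartan_of (c : nat) : int := if c == 0%N then 2 else if c == 1%N then -1 else 0.
Definition adj_of (c : nat) : int := (c == 1%N)%:R.

Lemma cartan_rel {r} (i j : 'I_r) : cartan r i j = cartan_of (rel i j).
Proof. by rewrite /cartan mxE /rel; case: (i == j) => //; case: (_ || _). Qed.

Lemma adj_rel {r} (i j : 'I_r) : adj i j = adj_of (rel i j).
Proof.
rewrite /adj /rel /adj_of; case: (i =P j) => [->|_]; last by case: (_ || _).
by rewrite !eqn_leq !ltnn.
Qed.

Definition entry (bi bj : bool) (u v c : nat) : int :=
  let s := half_sign in let t w := half_sign (w.+1 %% 4) in
  match bi, bj with
  | false, false => t v * (s u - s v) * adj_of c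
  | false, true => - (t u * s v * cartan_of c)
  | true, false => s u * t v * cartan_of c
  | true, true => s u * (t v - t u) * adj_of c
  end.

Lemma BM_entry r (M : 'I_r -> int) (p q : 'I_(r + r)) :
  BM M p q = entry (blk p) (blk q) (phase (M (idx p))) (phase (M (idx q))) (rel (idx p) (idx q)).
Proof.
have fl2S (x : int) : negpow (fl2 (x + 1)) = half_sign ((phase x).+1 %% 4).
  by rewrite negpow_fl2 phaseS.
rewrite -(splitK p) -(splitK q) /blk /idx !unsplitK.
case: (split p) => i; case: (split q) => j /=;
  rewrite ?block_mxEul ?block_mxEur ?block_mxEdl ?block_mxEdr mxE /entry
          ?negpowD ?fl2S !negpow_fl2 ?adj_rel ?cartan_rel //.
by rewrite mulrN1 mulNr.
Qed.

Lemma BM_ext {r} {M M' : 'I_r -> int} : (forall i, M i = M' i) -> BM M = BM M'.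
Proof. by move=> eqM; apply/matrixP => p q; rewrite !BM_entry !eqM. Qed.

Lemma BM_zero r : BM (fun _ : 'I_r => 0) = B0 r.
Proof.
rewrite /BM /B0; congr block_mx; apply/matrixP => i j; rewrite !mxE //.
- by rewrite subrr mulr0 mul0r.
- by rewrite mulN1r.
- by rewrite mul1r.
- by rewrite subrr mulr0 mul0r.
Qed.

Definition mut_entry (pk qk : bool) (bpq bpk bkq : int) : int :=
  if pk || qk then - bpq else bpq + sgz bpk * Num.max (bpk * bkq) 0.

Lemma mutB_entry n (k : 'I_n) (B : 'M[int]_n) (p q : 'I_n) :
  mutB k B p q = mut_entry (p == k) (q == k) (B p q) (B p k) (B k q).
Proof. by rewrite mxE. Qed.

Definition sign (e : bool) : int := if e then 1 else -1.
Definition shift (e : bool) (u : nat) : nat := if e then (u.+1 %% 4)%N else ((u + 3) %% 4)%N.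

Lemma phase_shift (x : int) (e : bool) : phase (x + sign e) = shift e (phase x).
Proof. by case: e; rewrite /= ?phaseS ?phaseN1. Qed.

Definition offset (b : bool) (u : nat) : int := (b (+) odd u : nat)%:Z.

Lemma lab_offset r (M : 'I_r -> int) (p : 'I_(r + r)) :
  lab M p = ((idx p).+1, M (idx p) + offset (blk p) (phase (M (idx p)))).
Proof.
rewrite /lab /idx /blk /offset -odd_phase.
by case: (split p) => i; case: (odd _); rewrite ?addr0.
Qed.

Lemma qmut_spec r (M M' : 'I_r -> int) (k : 'I_(r + r)) : qmut M M' k ->
  exists e : bool,
    [/\ forall b, M' b = if b == idx k then M (idx k) + sign e else M b
      & sign e = offset (blk k) (phase (M' (idx k))) - offset (blk k) (phase (M (idx k)))].
Proof.
case=> a [n [e [[e_pm1 M'a M'b] []]]].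
rewrite !lab_offset => -[idx_k lab_k] [_ lab'_k] _.
have {}idx_k : idx k = a by apply: val_inj.
rewrite idx_k in lab_k lab'_k *; exists (e == 1).
have sign_e : sign (e == 1) = e by case: e_pm1 => ->.
rewrite sign_e; split; last by lia.
by move=> b; case: eqP => [->|/eqP /M'b].
Qed.

Definition mutation_rule (bp bq bk e : bool) (up uq ua cpq cpa caq : nat) : bool :=
  let ua' := shift e ua in
  let up' := if cpa == 0%N then ua' else up in
  let uq' := if caq == 0%N then ua' else uq in
  [&& rel_consistent cpq cpa caq,
      path_ok cpq up uq, path_ok cpa up ua, path_ok caq ua uq,
      path_ok cpq up' uq', path_ok cpa up' ua', path_ok caq ua' uq' &
      sign e == offset bk ua' - offset bk ua] ==>
  (mut_entry ((bp == bk) && (cpa == 0%N)) ((bq == bk) && (caq == 0%N))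
     (entry bp bq up uq cpq) (entry bp bk up ua cpa) (entry bk bq ua uq caq)
   == entry bp bq up' uq' cpq).

Definition all_bool (P : bool -> bool) : bool := P true && P false.
Definition all_below (n : nat) (P : nat -> bool) : bool := all P (iota 0 n).

Lemma all_boolP (b : bool) (P : bool -> bool) : all_bool P -> P b.
Proof. by case: b => /andP[]. Qed.

Lemma all_belowP {n u : nat} (P : nat -> bool) : (u < n)%N -> all_below n P -> P u.
Proof. by move=> lt_un /allP; apply; rewrite mem_iota. Qed.

Lemma mutation_rule_table :
  all_bool (fun bp => all_bool (fun bq => all_bool (fun bk => all_bool (fun e =>
  all_below 4 (fun up => all_below 4 (fun uq => all_below 4 (fun ua =>
  all_below 3 (fun cpq => all_below 3 (fun cpa => all_below 3 (fun caq =>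
    mutation_rule bp bq bk e up uq ua cpq cpa caq)))))))))).
Proof. by vm_compute. Qed.

Lemma mutation_ruleP (bp bq bk e : bool) {up uq ua cpq cpa caq : nat} :
  (up < 4)%N -> (uq < 4)%N -> (ua < 4)%N -> (cpq < 3)%N -> (cpa < 3)%N -> (caq < 3)%N ->
  mutation_rule bp bq bk e up uq ua cpq cpa caq.
Proof.
move=> lt_up lt_uq lt_ua lt_cpq lt_cpa lt_caq.
move: mutation_rule_table.
move/(all_boolP bp)/(all_boolP bq)/(all_boolP bk)/(all_boolP e).
move/(all_belowP _ lt_up)/(all_belowP _ lt_uq)/(all_belowP _ lt_ua).
by move/(all_belowP _ lt_cpq)/(all_belowP _ lt_cpa)/(all_belowP _ lt_caq).
Qed.

Lemma mutB_BM {r} {M M' : 'I_r -> int} {k : 'I_(r + r)} :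
  motzkin M -> motzkin M' -> qmut M M' k -> mutB k (BM M) = BM M'.
Proof.
move=> motM motM' /qmut_spec[e [M'E offset_k]].
set a := idx k in M'E offset_k *; set ua' := shift e (phase (M a)).
have phaseM' b : phase (M' b) = if rel b a == 0%N then ua' else phase (M b).
  by rewrite M'E rel_eq0; case: eqP => // _; rewrite phase_shift.
have phaseM'a : phase (M' a) = ua' by rewrite phaseM' /rel eqxx.
apply/matrixP => p q; set i := idx p; set j := idx q.
have phaseM'j : phase (M' j) = if rel a j == 0%N then ua' else phase (M j).
  by rewrite phaseM' rel_sym.
rewrite mutB_entry !BM_entry !eq_pos -/a -/i -/j -!rel_eq0 [rel j a]rel_sym.
rewrite [phase (M' i)]phaseM' phaseM'j; apply/eqP.
move: (mutation_ruleP (blk p) (blk q) (blk k) e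
        (phase_lt4 (M i)) (phase_lt4 (M j)) (phase_lt4 (M a))
        (rel_lt3 i j) (rel_lt3 i a) (rel_lt3 a j)) => /implyP; apply.
rewrite rel_consistentP !(motzkin_path_ok _ _ motM).
have := motzkin_path_ok i j motM'; have := motzkin_path_ok i a motM'.
have := motzkin_path_ok a j motM'.
by rewrite offset_k [phase (M' i)]phaseM' phaseM'j phaseM'a -/ua' eqxx => -> -> ->.
Qed.

Lemma Bmut_BM {r} {Mseq : nat -> 'I_r -> int} {k : nat -> 'I_(r + r)} {T : nat} :
  (forall i, Mseq 0%N i = 0) ->
  (forall t, (t <= T)%N -> motzkin (Mseq t)) ->
  (forall t, (t < T)%N -> qmut (Mseq t) (Mseq t.+1) (k t)) ->
  forall t, (t <= T)%N -> Bmut k t = BM (Mseq t).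
Proof.
move=> M0 motMseq qmutMseq; elim=> [|t IHt] le_tT /=.
  by rewrite (BM_ext M0) BM_zero.
by rewrite IHt ?(ltnW le_tT) //;
  apply: mutB_BM (motMseq _ (ltnW le_tT)) (motMseq _ le_tT) (qmutMseq _ le_tT).
Qed.

Theorem mainTheorem12 (F : fieldType) (r : nat) (R : nat -> int -> F)
    (m : 'I_r -> int) (T : nat) (Mseq : nat -> 'I_r -> int)
    (k : nat -> 'I_(r + r)) :
  (0 < r)%N ->
  is_Qsystem r R ->
  alg_indep (r + r) (Qinit r R) ->
  motzkin m ->
  (forall i, Mseq 0%N i = 0) ->
  (forall t, (t <= T)%N -> motzkin (Mseq t)) ->
  (forall t, (t < T)%N -> qmut (Mseq t) (Mseq t.+1) (k t)) ->
  (forall t, (t < T)%N ->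
     forall p, mutx (k t) (Bmut k t) (clus R (Mseq t)) p = clus R (Mseq t.+1) p) ->
  (forall i, Mseq T i = m i) ->
  Bmut k T = BM m.
Proof.
(* The exchange matrices evolve independently of the cluster variables. *)
move=> _ _ _ _ M0 motMseq qmutMseq _ MT.
by rewrite (Bmut_BM M0 motMseq qmutMseq) // (BM_ext MT).
Qed.
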